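(* The suboperad of $\mathrm{CNCB}$ generated by $T_{bbb}$ and $T_{bbu}$ is isomorphic to the free (nonsymmetric) operad generated by two generators of arity $2$.
   Context: For $n\ge2$, a bicoloured noncrossing configuration (BNC) of size $n$ is a regular polygon with vertices $1,\dots,n+1$ clockwise, together with disjoint sets of blue and red arcs among the arcs $(i,j)$, $1\le i<j\le n+1$. The arcs $(i,i+1)$ are the edges ($i$th edge), $(1,n+1)$ is the base, and the others are diagonals. Coloured arcs are pairwise noncrossing ($(i,j),(k,l)$ cross iff $i<k<j<l$ or $k<i<l<j$), and red arcs are diagonals. There is one BNC of size $1$, a blue segment, which is the unit. The operad $\mathrm{CNCB}$ has the BNCs as elements (arity = size). Its composition $\mathfrak C\circ_i\mathfrak D$ ($\mathfrak C$ of size $n$, $\mathfrak D$ of size $m$) glues the base of $\mathfrak D$ on the $i$th edge of $\mathfrak C$. Arcs $(a,b)$ of $\mathfrak C$ become $(\sigma(a),\sigma(b))$ with $\sigma(v)=v$ for $v\le i$ and $v+m-1$ otherwise, and arcs $(a,b)$ of $\mathfrak D$ become $(a+i-1,b+i-1)$, keeping colours. The exception is the arc $(i,i+m)$, which is red if the $i$th edge of $\mathfrak C$ and the base of $\mathfrak D$ are both uncoloured, blue if both are blue, and uncoloured otherwise. BNCs of size $2$ are triangles with vertices $1,2,3$ (no diagonals). For $x,y,z\in\{b,u\}$, $T_{xyz}$ denotes the triangle whose first edge $(1,2)$ has colour $x$, whose base $(1,3)$ has colour $y$, and whose second edge $(2,3)$ has colour $z$, where $b$ = blue and $u$ = uncoloured.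 The suboperad generated by a set is the smallest suboperad containing it. *)

From mathcomp Require Import all_boot.
Set Implicit Arguments. Unset Strict Implicit. Unset Printing Implicit Defensive.

Inductive colour := Blue | Red | Unc.

(** A (raw) bicoloured configuration: a size [n] and a colouring of all pairs
    of naturals; the arc (i,j) (1 <= i < j <= n+1) has colour [bcol i j].
    Canonical representation: [bcol] is [Unc] on every pair which is not an
    arc, so that Leibniz equality is equality of configurations. *)
Record bnc := BNC { bsize : nat; bcol : nat -> nat -> colour }.

Definition is_arc (n i j : nat) : bool := (1 <= i) && (i < j) && (j <= n.+1).
Definition crossing (i j k l : nat) : bool :=
  ((i < k) && (k < j) && (j < l)) || ((k < i) && (i < l) && (l < j)).

(** Well-formedness: the BNCs of the paper (not needed in the statement, since
    the generated suboperad only contains BNCs; kept for documentation). *)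
Definition is_bnc (C : bnc) : Prop :=
  let n := bsize C in
  [/\ 1 <= n,
      (forall i j, bcol C i j <> Unc -> is_arc n i j),
      (forall i j, bcol C i j = Red -> j != i.+1 /\ ~ (i == 1 /\ j == n.+1)),
      (forall i j k l, bcol C i j <> Unc -> bcol C k l <> Unc -> ~~ crossing i j k l)
    & (n = 1 -> bcol C 1 2 = Blue)].

Definition bunit : bnc :=
  BNC 1 (fun x y => if (x == 1) && (y == 2) then Blue else Unc).

(** Triangles T_xyz: first edge (1,2) colour x, base (1,3) colour y,
    second edge (2,3) colour z. *)
Definition triangle (x y z : colour) : bnc :=
  BNC 2 (fun a b =>
           if (a == 1) && (b == 2) then x
           else if (a == 1) && (b == 3) then y
           else if (a == 2) && (b == 3) then z else Unc).

Definition T_bbb := triangle Blue Blue Blue.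
Definition T_bbu := triangle Blue Blue Unc.

(** Colour of the arc (i, i+m) in C o_i D, from the colour [e] of the i-th
    edge of C and the colour [b] of the base of D. *)
Definition glue_colour (e b : colour) : colour :=
  match e, b with
  | Unc, Unc => Red
  | Blue, Blue => Blue
  | _, _ => Unc
  end.

(** Partial composition C o_i D (meaningful for 1 <= i <= size C).
    Vertex v of C goes to sigma v = v (v <= i), v+m-1 (v > i); vertex a of D
    goes to a+i-1.  We compute the colour of a result arc (x,y) by inverting
    these maps. *)
Definition bcomp (C : bnc) (i : nat) (D : bnc) : bnc :=
  let n := bsize C in
  let m := bsize D in
  let in_img v := (v <= i) || (i + m <= v) in
  let sinv v := if v <= i then v else v - m + 1 in
  BNC (n + m - 1)
    (fun x y =>
       if (x == i) && (y == i + m) then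
         glue_colour (bcol C i i.+1) (bcol D 1 m.+1)
       else if (i <= x) && (y <= i + m) then bcol D (x - i + 1) (y - i + 1)
       else if in_img x && in_img y then bcol C (sinv x) (sinv y)
       else Unc).

Inductive gen_bbb_bbu : bnc -> Prop :=
  | gen_unit : gen_bbb_bbu bunit
  | gen_bbb : gen_bbb_bbu T_bbb
  | gen_bbu : gen_bbb_bbu T_bbu
  | gen_comp C D i : gen_bbb_bbu C -> gen_bbb_bbu D ->
      1 <= i <= bsize C -> gen_bbb_bbu (bcomp C i D).

(** The free nonsymmetric operad on two binary generators (labelled by a
    boolean): planar binary trees with bicoloured internal nodes; arity =
    number of leaves; unit = the leaf; o_i = grafting on the i-th leaf. *)
Inductive tree := Leaf | Node of bool & tree & tree.

Fixpoint arity (t : tree) : nat :=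
  match t with Leaf => 1 | Node _ l r => arity l + arity r end.

Fixpoint graft (t : tree) (i : nat) (s : tree) : tree :=
  match t with
  | Leaf => if i == 1 then s else Leaf
  | Node c l r =>
      if i <= arity l then Node c (graft l i s) r
      else Node c l (graft r (i - arity l) s)
  end.

From mathcomp Require Import all_boot zify.
From Stdlib Require Import FunctionalExtensionality.

(* A planar binary tree with n leaves is dual to a triangulation of the
   (n+1)-gon: the subtree on leaves p..q becomes the arc (p, q+1).  Colour such
   an arc blue when it is the root or a left child, and, for a right child,
   blue iff its parent is labelled like T_bbb.  Generators have no red arcs and
   every image has a blue base, so the glued arc of C o_i D keeps the colour of
   the i-th edge of C: composition is grafting.  Conversely the tree is read
   back from the colouring, since the left subtree's base is the last blue arc
   (1, y) with y <= n. *)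

Definition bool_colour (b : bool) : colour := if b then Blue else Unc.

Lemma bool_colour_inj : injective bool_colour.
Proof. by case=> [] []. Qed.

(* [b] is the colour of the base of [t], which is decided by its parent. *)
Fixpoint tree_col (b : bool) (t : tree) (x y : nat) : colour :=
  match t with
  | Leaf => if (x == 1) && (y == 2) then bool_colour b else Unc
  | Node c l r =>
      if (x == 1) && (y == (arity l + arity r).+1) then bool_colour b
      else if y <= (arity l).+1 then tree_col true l x y
      else tree_col c r (x - arity l) (y - arity l)
  end.

Arguments tree_col : simpl never.

Lemma tree_col_leaf b x y :
  tree_col b Leaf x y = if (x == 1) && (y == 2) then bool_colour b else Unc.
Proof. by []. Qed.

Lemma tree_col_node b c l r x y :
  tree_col b (Node c l r) x y =
  if (x == 1) && (y == (arity l + arity r).+1) then bool_colour b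
  else if y <= (arity l).+1 then tree_col true l x y
  else tree_col c r (x - arity l) (y - arity l).
Proof. by []. Qed.

Lemma arity_gt0 t : 0 < arity t.
Proof. by elim: t => //= c l IHl r IHr; lia. Qed.

Lemma tree_col_out b t x y :
  x < 1 \/ y <= x \/ arity t + 1 < y -> tree_col b t x y = Unc.
Proof.
elim: t b x y => [|c l IHl r IHr] b x y /= H.
  by rewrite tree_col_leaf; case: ifP => // E; lia.
have := arity_gt0 l; have := arity_gt0 r => Hr Hl.
rewrite tree_col_node; case: ifP => E1; first lia.
by case: ifP => E2; [apply: IHl | apply: IHr]; lia.
Qed.

Lemma tree_col_base b t x y :
  x = 1 -> y = arity t + 1 -> tree_col b t x y = bool_colour b.
Proof.
by move=> -> ->; case: t => [|c l r]; rewrite /= ?tree_col_leaf ?tree_col_node ?addn1 !eqxx.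
Qed.

Lemma tree_col_BlueVUnc b t x y : tree_col b t x y = Blue \/ tree_col b t x y = Unc.
Proof.
elim: t b x y => [|c l IHl r IHr] b x y.
  by rewrite tree_col_leaf; case: ifP => _; [case: b|]; [left|right|right].
rewrite tree_col_node; case: ifP => _; first by case: b; [left|right].
by case: ifP.
Qed.

Lemma tree_col_congr b b' t x1 y1 x2 y2 : x1 = x2 -> y1 = y2 ->
  b = b' \/ ~ (x1 = 1 /\ y1 = arity t + 1) -> tree_col b t x1 y1 = tree_col b' t x2 y2.
Proof.
move=> <- <- [<- //|H]; case: t H => [|c l r] /= H;
  rewrite ?tree_col_leaf ?tree_col_node; case: ifP => // /andP[/eqP Ex /eqP Ey];
  exfalso; apply: H; lia.
Qed.

Lemma tree_col_shift b c l r x y : 1 <= x ->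
  tree_col b (Node c l r) (arity l + x) (arity l + y) = tree_col c r x y.
Proof.
move=> Hx; have := arity_gt0 l => Hl.
rewrite tree_col_node; case: ifP => E1; first lia.
case: ifP => E2; last by rewrite !addKn.
by rewrite !tree_col_out //; lia.
Qed.

Lemma arity_graft t i s :
  1 <= i <= arity t -> arity (graft t i s) = arity t + arity s - 1.
Proof.
elim: t i => [|c l IHl r IHr] i /= Hi.
  have -> : i = 1 by lia.
  rewrite eqxx; lia.
have := arity_gt0 l; have := arity_gt0 r; have := arity_gt0 s => Hs Hr Hl.
by case: ifP => E /=; [rewrite IHl | rewrite IHr]; lia.
Qed.

(* The colouring of [bcomp] when the base of D is blue and C has no red arc. *)
Definition comp_col (C : nat -> nat -> colour) (i m : nat)
    (D : nat -> nat -> colour) (x y : nat) : colour :=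
  let in_img v := (v <= i) || (i + m <= v) in
  let sinv v := if v <= i then v else v - m + 1 in
  if (x == i) && (y == i + m) then C i i.+1
  else if (i <= x) && (y <= i + m) then D (x - i + 1) (y - i + 1)
  else if in_img x && in_img y then C (sinv x) (sinv y)
  else Unc.

Arguments comp_col : simpl never.

Ltac case_innermost_if :=
  match goal with |- context [if ?b then _ else _] =>
    lazymatch b with
    | context [if _ then _ else _] => fail
    | true => fail
    | false => fail
    | _ => let E := fresh "E" in case E: b
    end
  end.

Ltac split_ifs := repeat (case_innermost_if; try (exfalso; lia)).

Ltac close_tree_col :=
  try (rewrite [LHS]tree_col_out; [|simpl; lia]);
  try (rewrite [RHS]tree_col_out; [|simpl; lia]);
  try (rewrite [LHS]tree_col_base; [| simpl; lia | simpl; lia]);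
  try (rewrite [RHS]tree_col_base; [| simpl; lia | simpl; lia]);
  first [ reflexivity
        | apply: tree_col_congr;
          [lia | lia | first [left; reflexivity | right; simpl; lia]] ].

Ltac case_tree_col_range t x y :=
  have [?|?] : (x < 1 \/ y <= x \/ arity t + 1 < y) \/
               (1 <= x /\ x < y /\ y <= arity t + 1) by lia.

Ltac solve_tree_col :=
  split_ifs;
  first [ close_tree_col
        | match goal with |- tree_col _ ?t ?x ?y = _ =>
            case_tree_col_range t x y; close_tree_col end
        | match goal with |- _ = tree_col _ ?t ?x ?y =>
            case_tree_col_range t x y; close_tree_col end ].

Lemma comp_col_shift C i m D x y k :
  comp_col C (k + i) m D (k + x) (k + y) =
  comp_col (fun a b => C (k + a) (k + b)) i m D x y.
Proof.
rewrite /comp_col /= !eqn_add2l -!addnA eqn_add2l !leq_add2l !subnDl.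
by split_ifs; try reflexivity; f_equal; lia.
Qed.

Lemma eq_comp_col C C' i m D x y : 1 <= i -> 1 <= x ->
  (forall a b, 1 <= a -> C a b = C' a b) -> comp_col C i m D x y = comp_col C' i m D x y.
Proof.
move=> Hi Hx eqCC'; rewrite /comp_col /= eqCC' //.
by split_ifs; try reflexivity; rewrite eqCC' //; lia.
Qed.

Lemma comp_col_out C i m D x y : 0 < m ->
  (forall a b, b <= a -> C a b = Unc) -> (forall a b, b <= a -> D a b = Unc) ->
  y <= x -> comp_col C i m D x y = Unc.
Proof.
move=> Hm HC HD Hxy; rewrite /comp_col /=.
by split_ifs; try reflexivity; first [rewrite HC //; lia | rewrite HD //; lia].
Qed.

Lemma tree_col_graft s t b i x y : 1 <= i <= arity t ->
  tree_col b (graft t i s) x y = comp_col (tree_col b t) i (arity s) (tree_col true s) x y.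
Proof.
have Hs := arity_gt0 s.
elim: t b i x y => [|c l IHl r IHr] b i x y /= Hi.
  have -> : i = 1 by lia.
  by rewrite /comp_col /= !tree_col_leaf; solve_tree_col.
have := arity_gt0 l; have := arity_gt0 r => Hr Hl.
case: ifPn => Eil.
  rewrite tree_col_node arity_graft ?IHl; try lia.
  by rewrite /comp_col /= !tree_col_node; solve_tree_col.
have [j Ej] : exists j, i = arity l + j by exists (i - arity l); lia.
subst i; rewrite addKn.
have [Hxy|Hxy] := leqP y x.
  rewrite tree_col_out; last lia.
  by rewrite comp_col_out // => a z Haz; rewrite tree_col_out //; lia.
have [Hx|Hx] := leqP x (arity l).
  rewrite tree_col_node arity_graft ?IHr; try lia.
  rewrite /comp_col /= !tree_col_node.
  have -> : x - arity l = 0 by lia.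
  by solve_tree_col.
have [x' Ex] : exists x', x = arity l + x' by exists (x - arity l); lia.
have [y' Ey] : exists y', y = arity l + y' by exists (y - arity l); lia.
subst x y.
rewrite tree_col_shift ?IHr ?comp_col_shift; try lia.
by apply: eq_comp_col; try lia; move=> a z Ha; rewrite tree_col_shift.
Qed.

Definition tree_bnc (t : tree) : bnc := BNC (arity t) (tree_col true t).

Lemma tree_bnc_leaf : tree_bnc Leaf = bunit.
Proof. by []. Qed.

Lemma tree_bnc_graft t i s :
  1 <= i <= arity t -> tree_bnc (graft t i s) = bcomp (tree_bnc t) i (tree_bnc s).
Proof.
move=> Hi; rewrite /tree_bnc /bcomp /= arity_graft //; congr BNC.
apply: functional_extensionality => x; apply: functional_extensionality => y.
rewrite tree_col_graft // /comp_col /= (tree_col_base true s 1 (arity s).+1) ?addn1 //.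
by case: (tree_col_BlueVUnc true t i i.+1) => ->.
Qed.

Lemma tree_bnc_corolla c :
  tree_bnc (Node c Leaf Leaf) = triangle Blue Blue (bool_colour c).
Proof.
rewrite /tree_bnc /triangle; congr BNC.
apply: functional_extensionality => x; apply: functional_extensionality => y.
by rewrite tree_col_node !tree_col_leaf /=; split_ifs.
Qed.

Lemma gen_tree_bnc t : gen_bbb_bbu (tree_bnc t).
Proof.
elim: t => [|c l IHl r IHr]; first exact: gen_unit.
have -> : Node c l r = graft (graft (Node c Leaf Leaf) 2 r) 1 l by [].
have Hr := arity_gt0 r.
rewrite !tree_bnc_graft /=; try lia.
apply: gen_comp => //; apply: gen_comp => //.
by rewrite tree_bnc_corolla; case: c; [exact: gen_bbb | exact: gen_bbu].
Qed.

Lemma tree_bnc_onto C : gen_bbb_bbu C -> exists t, tree_bnc t = C.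
Proof.
elim => [|||C' D i _ [t <-] _ [s <-] Hi].
- by exists Leaf.
- by exists (Node true Leaf Leaf); rewrite tree_bnc_corolla.
- by exists (Node false Leaf Leaf); rewrite tree_bnc_corolla.
- by exists (graft t i s); rewrite tree_bnc_graft.
Qed.

Lemma tree_col_node_left b c l r x y :
  y <= (arity l).+1 -> tree_col b (Node c l r) x y = tree_col true l x y.
Proof.
by move=> Hy; have := arity_gt0 r; rewrite tree_col_node Hy; case: ifP => //; lia.
Qed.

Lemma tree_col_left_base b c l r : tree_col b (Node c l r) 1 (arity l).+1 = Blue.
Proof. by rewrite tree_col_node_left // tree_col_base ?addn1. Qed.

Lemma tree_col_beyond_left_base b c l r y :
  (arity l).+1 < y <= arity l + arity r -> tree_col b (Node c l r) 1 y = Unc.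
Proof.
move=> Hy; have := arity_gt0 l => Hl.
by rewrite tree_col_node; case: ifP; [lia|]; rewrite ltnNge in Hy;
  case/andP: Hy => /negbTE -> _; rewrite tree_col_out //; lia.
Qed.

Lemma tree_col_right_base b c l r :
  tree_col b (Node c l r) (arity l).+1 (arity l + arity r).+1 = bool_colour c.
Proof.
by rewrite -(addn1 (arity l)) -addnS tree_col_shift // tree_col_base ?addn1.
Qed.

Lemma left_arity_eq b c1 l1 r1 c2 l2 r2 :
  arity l1 + arity r1 = arity l2 + arity r2 ->
  tree_col b (Node c1 l1 r1) =2 tree_col b (Node c2 l2 r2) -> arity l1 = arity l2.
Proof.
wlog: c1 l1 r1 c2 l2 r2 / arity l1 <= arity l2 => [hwlog Ha Ht|Hle Ha Ht].
  by case: (leqP (arity l1) (arity l2)) => H;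
    [apply: hwlog | symmetry; apply: hwlog] => //; lia.
apply/eqP; rewrite eqn_leq Hle /=; apply/negP => Hlt.
have := Ht 1 (arity l2).+1.
by rewrite tree_col_left_base tree_col_beyond_left_base //; have := arity_gt0 r2; lia.
Qed.

Lemma tree_col_inj b t1 t2 :
  arity t1 = arity t2 -> tree_col b t1 =2 tree_col b t2 -> t1 = t2.
Proof.
elim: t1 b t2 => [|c1 l1 IHl r1 IHr] b [|c2 l2 r2] /= Ha Ht //.
- by have := arity_gt0 l2; have := arity_gt0 r2; lia.
- by have := arity_gt0 l1; have := arity_gt0 r1; lia.
have El : arity l1 = arity l2 by apply: left_arity_eq Ha Ht.
have Er : arity r1 = arity r2 by lia.
have Ec : c1 = c2.
  have := Ht (arity l1).+1 (arity l1 + arity r1).+1.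
  by rewrite tree_col_right_base El Er tree_col_right_base => /bool_colour_inj.
subst c2; congr Node.
- apply: (IHl true) => // x y.
  have [Hy|Hy] := leqP y (arity l1).+1.
    by rewrite -(tree_col_node_left b c1 l1 r1) // Ht tree_col_node_left -?El.
  by rewrite !tree_col_out //; lia.
- apply: (IHr c1) => // x y.
  have [Hx|Hx] := leqP x 0; first by rewrite !tree_col_out //; lia.
  by rewrite -(tree_col_shift b c1 l1 r1) // Ht El tree_col_shift.
Qed.

Lemma tree_bnc_inj : injective tree_bnc.
Proof.
move=> t1 t2 E; apply: (@tree_col_inj true); first exact: (f_equal bsize E).
by move=> x y; rewrite -[LHS]/(bcol (tree_bnc t1) x y) E.
Qed.

Theorem theorem3p3 :
  exists phi : tree -> bnc,
    [/\ (forall t, bsize (phi t) = arity t),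
        (forall t, gen_bbb_bbu (phi t)),
        phi Leaf = bunit
      & (forall t i s, 1 <= i <= arity t ->
           phi (graft t i s) = bcomp (phi t) i (phi s))] /\
    (forall t1 t2, phi t1 = phi t2 -> t1 = t2) /\
    (forall C, gen_bbb_bbu C -> exists t, phi t = C).
Proof.
exists tree_bnc; split; first split => //.
- exact: gen_tree_bnc.
- exact: tree_bnc_graft.
split; [exact: tree_bnc_inj | exact: tree_bnc_onto].
Qed.
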